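(* In the generic model, let $\sigma:=-\partial_0\circ\mathcal P\colon H_R\to\mathbb R$ (the coefficient of $x$ in $\mathcal P$, negated). Then for every $w\in H_R$, $$\sigma\big(B_+(w)\big)=\sum_{n\ge0}c_{n-1}\,\sigma^{\star n}(w),$$ where $\sigma^{\star0}=\varepsilon$ and the sum is finite since $\sigma^{\star n}$ vanishes on forests with fewer than $n$ nodes.
   Context: Generic model: $f\colon[0,\infty)\to\mathbb R$ continuous with $f(\zeta)-c/\zeta=O(\zeta^{-1-\epsilon})$ at infinity; Mellin transform $F(z)=\int_0^\infty f(\zeta)\zeta^{-z}d\zeta=\sum_{n\ge-1}c_nz^n$ near $0$. $H_R$: Connes–Kreimer Hopf algebra of rooted trees ($B_+$ grafts a forest onto a new root; $\Delta\circ B_+=B_+\otimes\mathbb 1+(\mathrm{id}\otimes B_+)\circ\Delta$; counit $\varepsilon$; antipode $S$). $\phi_s(w)=s^{-z|w|}\prod_vF(z|w_v|)$ multiplicative, $\phi_{R,s}=\phi_\mu^{\star-1}\star\phi_s$, and $\mathcal P(w)\in\mathbb R[x]$ with $\lim_{z\to0}\phi_{R,s}(w)=\mathcal P(w)(\ln\frac s\mu)$. $\partial_0=\mathrm{ev}_0\circ\frac d{dx}$; convolution of functionals $\alpha\star\beta=m\circ(\alpha\otimes\beta)\circ\Delta$. *)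

From Stdlib Require Import Reals List.
Import ListNotations.
Open Scope R_scope.

(* Trees are represented planarly; all functionals below only depend on the
   isomorphism class, and every (non-planar) forest has a representative. *)
Inductive tree : Type := Node : list tree -> tree.
Definition forest := list tree.   (* a monomial of H_R; [] is the unit 1 *)

Definition Bplus (w : forest) : tree := Node w.

Fixpoint tsize (t : tree) : nat :=
  match t with
  | Node ts => S ((fix fs (l : list tree) : nat :=
                     match l with [] => 0%nat | u :: l' => (tsize u + fs l')%nat end) ts)
  end.
Definition fsize (w : forest) : nat := fold_right (fun t n => (tsize t + n)%nat) 0%nat w.

(* Coproduct, given as the list of terms  w' (x) w''  (each with coefficient 1):
   Delta(1) = 1 (x) 1, Delta multiplicative,
   Delta(B_+ w) = B_+ w (x) 1 + (id (x) B_+) Delta(w). *)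
Fixpoint cop_t (t : tree) : list (forest * forest) :=
  match t with
  | Node ws =>
      ([t], []) ::
      map (fun p => (fst p, [Node (snd p)]))
        ((fix cop_f (l : list tree) : list (forest * forest) :=
            match l with
            | [] => [([], [])]
            | u :: l' =>
                flat_map (fun p => map (fun q => (fst p ++ fst q, snd p ++ snd q)%list)
                                       (cop_f l'))
                         (cop_t u)
            end) ws)
  end.

Fixpoint cop (w : forest) : list (forest * forest) :=
  match w with
  | [] => [([], [])]
  | u :: l' =>
      flat_map (fun p => map (fun q => (fst p ++ fst q, snd p ++ snd q)%list) (cop l'))
               (cop_t u)
  end.

(* Linear functionals H_R -> R are given by their values on forests. *)
Definition counit (w : forest) : R := match w with [] => 1 | _ => 0 end.

Definition conv (alpha beta : forest -> R) (w : forest) : R :=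
  fold_right Rplus 0 (map (fun p => alpha (fst p) * beta (snd p)) (cop w)).

Fixpoint conv_pow (alpha : forest -> R) (n : nat) : forest -> R :=
  match n with
  | O => counit
  | S k => conv alpha (conv_pow alpha k)
  end.

(* prod over the vertices v of t of G(|t_v|), t_v the subtree rooted at v *)
Fixpoint tprod (G : nat -> R) (t : tree) : R :=
  match t with
  | Node ts => G (tsize t) *
      (fix fp (l : list tree) : R :=
         match l with [] => 1 | u :: l' => tprod G u * fp l' end) ts
  end.
Definition fprod (G : nat -> R) (w : forest) : R := fold_right (fun t r => tprod G t * r) 1 w.

(* phi_s(w) = s^{-z|w|} prod_v F(z |w_v|)  (as a function of the regulator z) *)
Definition phi (F : R -> R) (s z : R) (w : forest) : R :=
  Rpower s (- (z * INR (fsize w))) * fprod (fun n => F (z * INR n)) w.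

Definition improper_int_0_inf (g : R -> R) (l : R) : Prop :=
  (forall a b, 0 < a -> a <= b -> inhabited (Riemann_integrable g a b)) /\
  forall eta, 0 < eta -> exists d M, 0 < d /\ 0 < M /\
    forall a b (pr : Riemann_integrable g a b), 0 < a < d -> M < b ->
      Rabs (RiemannInt pr - l) < eta.

(* polynomials as coefficient lists, lowest degree first *)
Definition peval (p : list R) (x : R) : R := fold_right (fun a acc => a + x * acc) 0 p.
(* partial_0 = ev_0 o d/dx : the coefficient of x *)
Definition partial0 (p : list R) : R := nth 1 p 0.

From Stdlib Require Import Reals List Lra Lia FunctionalExtensionality.
Import ListNotations.
Open Scope R_scope.

(* 1. Hopf algebra.  The coproduct of H_R is counital and coassociative, so
      functionals form a convolution monoid; a left inverse of a functional
      taking the value 1 on the unit is two-sided, and twisting by exp(c |.|)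
      is a convolution morphism.  Consequently phi_{R,s} satisfies a group law
      in ln s at every regulator z.
   2. The limit P.  Letting z -> 0 gives P(v)(a + b) = sum P(v')(a) P(v'')(b);
      differentiating in b yields k! (-1)^k P_k = sigma^{*k} for the
      coefficients P_k of P, and sigma^{*k} vanishes on forests with < k nodes.
   3. Moments.  At finite z, phi_{R, mu e^b}(v) is a polynomial in
      tau = (e^{-zb} - 1)/z whose coefficients are z^j times binomial moments
      of Delta(v).  Finite differences in b give an asymptotically triangular
      linear system, so these coefficients tend to (-1)^j P_j(v).
   4. B_+.  phi_mu(B_+ w'') contributes the factor F(z (|w''| + 1)); writing
      y F(y) = sum_{k <= |w|} c_k y^k + O(y^{|w|+1}) and applying 3 to w gives
      sigma(B_+ w) = sum_{k <= |w|} c_k k! (-1)^k P_k(w), which is 2 + 4.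
   (Here c k is the Laurent coefficient c_{k-1} of F.  The hypotheses on f
   only serve to produce F; the proof uses the Laurent expansion of F.) *)

Definition sumL {A} (f : A -> R) (l : list A) : R := fold_right Rplus 0 (map f l).

Lemma sumL_cons {A} (f : A -> R) a l : sumL f (a :: l) = f a + sumL f l.
Proof. reflexivity. Qed.

Lemma sumL_app {A} (f : A -> R) l1 l2 : sumL f (l1 ++ l2) = sumL f l1 + sumL f l2.
Proof. unfold sumL. induction l1 as [|a l1 IH]; simpl; [ring|]. rewrite IH; ring. Qed.

Lemma sumL_map {A B} (f : B -> R) (g : A -> B) l : sumL f (map g l) = sumL (fun x => f (g x)) l.
Proof. unfold sumL. now rewrite map_map. Qed.

Lemma sumL_flat_map {A B} (f : B -> R) (g : A -> list B) l :
  sumL f (flat_map g l) = sumL (fun x => sumL f (g x)) l.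
Proof.
  induction l as [|a l IH]; [reflexivity|].
  simpl flat_map. now rewrite sumL_app, sumL_cons, IH.
Qed.

Lemma sumL_ext {A} (f g : A -> R) l : (forall x, In x l -> f x = g x) -> sumL f l = sumL g l.
Proof.
  induction l as [|a l IH]; intros H; [reflexivity|].
  rewrite !sumL_cons, H, IH; auto.
  - intros; apply H; now right.
  - now left.
Qed.

Lemma sumL_plus {A} (f g : A -> R) l : sumL (fun x => f x + g x) l = sumL f l + sumL g l.
Proof. unfold sumL. induction l as [|a l IH]; simpl; [ring|]. rewrite IH; ring. Qed.

Lemma sumL_minus {A} (f g : A -> R) l : sumL (fun x => f x - g x) l = sumL f l - sumL g l.
Proof. unfold sumL. induction l as [|a l IH]; simpl; [ring|]. rewrite IH; ring. Qed.

Lemma sumL_scal_l {A} (c : R) (f : A -> R) l : sumL (fun x => c * f x) l = c * sumL f l.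
Proof. unfold sumL. induction l as [|a l IH]; simpl; [ring|]. rewrite IH; ring. Qed.

Lemma sumL_scal_r {A} (c : R) (f : A -> R) l : sumL (fun x => f x * c) l = sumL f l * c.
Proof. unfold sumL. induction l as [|a l IH]; simpl; [ring|]. rewrite IH; ring. Qed.

Lemma sumL_zero {A} (f : A -> R) l : (forall x, In x l -> f x = 0) -> sumL f l = 0.
Proof.
  induction l as [|a l IH]; intros H; [reflexivity|].
  rewrite sumL_cons, H, IH; [ring| |].
  - intros; apply H; now right.
  - now left.
Qed.

Lemma sumL_swap {A B} (F : A -> B -> R) l1 l2 :
  sumL (fun x => sumL (fun y => F x y) l2) l1 = sumL (fun y => sumL (fun x => F x y) l1) l2.
Proof.
  induction l1 as [|a l1 IH]; cbn.
  - symmetry. now apply sumL_zero.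
  - unfold sumL at 1 in IH. rewrite IH, <- sumL_plus. reflexivity.
Qed.

Fixpoint sum_lt (n : nat) (f : nat -> R) : R :=
  match n with O => 0 | S k => f O + sum_lt k (fun j => f (S j)) end.

Lemma sum_lt_ext n f g : (forall j, (j < n)%nat -> f j = g j) -> sum_lt n f = sum_lt n g.
Proof.
  revert f g; induction n; intros f g H; cbn; auto.
  rewrite H by lia. f_equal. apply IHn. intros; apply H; lia.
Qed.

Lemma sum_lt_plus n f g : sum_lt n (fun j => f j + g j) = sum_lt n f + sum_lt n g.
Proof. revert f g; induction n; intros; cbn; [ring|]. rewrite IHn. ring. Qed.

Lemma sum_lt_minus n f g : sum_lt n (fun j => f j - g j) = sum_lt n f - sum_lt n g.
Proof. revert f g; induction n; intros; cbn; [ring|]. rewrite IHn. ring. Qed.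

Lemma sum_lt_scal n c f : sum_lt n (fun j => c * f j) = c * sum_lt n f.
Proof. revert f; induction n; intros; cbn; [ring|]. rewrite IHn. ring. Qed.

Lemma sum_lt_zero n f : (forall j, (j < n)%nat -> f j = 0) -> sum_lt n f = 0.
Proof.
  intros H. rewrite (sum_lt_ext n f (fun _ => 0)) by auto. clear H.
  induction n; cbn; auto. rewrite IHn; ring.
Qed.

Lemma sum_lt_S_r n f : sum_lt (S n) f = sum_lt n f + f n.
Proof.
  revert f; induction n; intros; [cbn; ring|].
  change (sum_lt (S (S n)) f) with (f O + sum_lt (S n) (fun j => f (S j))).
  rewrite IHn. cbn. ring.
Qed.

Lemma sum_lt_single n k f :
  (k < n)%nat -> (forall j, (j < n)%nat -> j <> k -> f j = 0) -> sum_lt n f = f k.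
Proof.
  revert k f; induction n; intros k f Hk H; [lia|]. cbn. destruct k.
  - rewrite sum_lt_zero; [ring|]. intros j Hj. apply H; lia.
  - rewrite H by lia. rewrite (IHn k (fun j => f (S j))); [ring|lia|]. intros; apply H; lia.
Qed.

Lemma sum_lt_sumL {A} n (F : A -> nat -> R) l :
  sumL (fun x => sum_lt n (F x)) l = sum_lt n (fun j => sumL (fun x => F x j) l).
Proof.
  revert F; induction n; intros F; cbn.
  - now apply sumL_zero.
  - rewrite sumL_plus, IHn. reflexivity.
Qed.

Lemma sum_f_R0_sum_lt f n : sum_f_R0 f n = sum_lt (S n) f.
Proof. induction n; cbn; [ring|]. rewrite IHn, <- (sum_lt_S_r (S n)). reflexivity. Qed.

(** * The coproduct of H_R *)

(* Product of two coproduct expansions, i.e. Delta(u v) = Delta(u) Delta(v). *)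
Definition pair_app (p q : forest * forest) : forest * forest :=
  (fst p ++ fst q, snd p ++ snd q)%list.
Definition cop_mul (A B : list (forest * forest)) : list (forest * forest) :=
  flat_map (fun p => map (pair_app p) B) A.

Lemma cop_cons u l : cop (u :: l) = cop_mul (cop_t u) (cop l).
Proof. reflexivity. Qed.

Lemma cop_t_Node ws :
  cop_t (Node ws) = ([Node ws], []) :: map (fun p => (fst p, [Node (snd p)])) (cop ws).
Proof. reflexivity. Qed.

Lemma cop_mul_unit_l B : cop_mul [([], [])] B = B.
Proof.
  unfold cop_mul. cbn. rewrite app_nil_r.
  induction B as [|[a b] B IH]; cbn; [reflexivity|]. now rewrite IH.
Qed.

Lemma cop_mul_unit_r A : cop_mul A [([], [])] = A.
Proof.
  induction A as [|[a b] A IH]; cbn; [reflexivity|].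
  unfold pair_app. cbn. rewrite !app_nil_r. now f_equal.
Qed.

Lemma cop_mul_assoc A B C : cop_mul (cop_mul A B) C = cop_mul A (cop_mul B C).
Proof.
  unfold cop_mul. induction A as [|a A IH]; cbn; [reflexivity|].
  rewrite flat_map_app, IH. f_equal. clear IH.
  induction B as [|b B IHB]; cbn; [reflexivity|].
  rewrite map_app, IHB, map_map. f_equal. apply map_ext. intros q.
  unfold pair_app. cbn. now rewrite !app_assoc.
Qed.

Lemma cop_app a b : cop (a ++ b) = cop_mul (cop a) (cop b).
Proof.
  induction a as [|u a IH]; cbn [app].
  - now rewrite cop_mul_unit_l.
  - now rewrite !cop_cons, IH, cop_mul_assoc.
Qed.

Lemma cop_single t : cop [t] = cop_t t.
Proof. apply cop_mul_unit_r. Qed.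

Lemma sumL_cop_mul (f : forest * forest -> R) A B :
  sumL f (cop_mul A B) = sumL (fun p => sumL (fun q => f (pair_app p q)) B) A.
Proof. unfold cop_mul. rewrite sumL_flat_map. apply sumL_ext; intros. apply sumL_map. Qed.

Lemma In_cop_mul p A B :
  In p (cop_mul A B) -> exists a b, In a A /\ In b B /\ p = pair_app a b.
Proof.
  unfold cop_mul. intros H. apply in_flat_map in H as [a [Ha Hb]].
  apply in_map_iff in Hb as [b [<- Hb]]. now exists a, b.
Qed.

Lemma cop_ind (Q : forest -> list (forest * forest) -> Prop) :
  Q [] (cop []) ->
  (forall u l, Q [u] (cop_t u) -> Q l (cop l) -> Q (u :: l) (cop (u :: l))) ->
  (forall ws, Q ws (cop ws) -> Q [Node ws] (cop_t (Node ws))) ->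
  forall w, Q w (cop w).
Proof.
  intros Hnil Hcons HNode.
  assert (Htree : forall t, Q [t] (cop_t t)).
  { fix IH 1. intros [ws]. apply HNode.
    induction ws as [|u ws IHws]; [exact Hnil|]. apply Hcons; [apply IH | exact IHws]. }
  induction w; auto.
Qed.

Lemma fsize_cons t w : fsize (t :: w) = (tsize t + fsize w)%nat.
Proof. reflexivity. Qed.

Lemma fsize_app a b : fsize (a ++ b) = (fsize a + fsize b)%nat.
Proof. induction a as [|t a IH]; [reflexivity|]. cbn [app]. rewrite !fsize_cons, IH. lia. Qed.

Lemma fsize_single t : fsize [t] = tsize t.
Proof. cbn. lia. Qed.

Lemma tsize_Node ws : tsize (Node ws) = S (fsize ws).
Proof. reflexivity. Qed.

Lemma fsize_nonnil w : w <> [] -> (1 <= fsize w)%nat.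
Proof. destruct w as [|[ws] w]; [congruence|]. intros _. cbn. lia. Qed.

Lemma size_cop w p : In p (cop w) -> (fsize (fst p) + fsize (snd p))%nat = fsize w.
Proof.
  revert p. apply (cop_ind (fun w L => forall p, In p L ->
                              (fsize (fst p) + fsize (snd p))%nat = fsize w)).
  - intros p [<-|[]]. reflexivity.
  - intros u l Hu Hl p Hp. apply In_cop_mul in Hp as [a [b [Ha [Hb ->]]]].
    unfold pair_app. cbn [fst snd]. rewrite !fsize_app. specialize (Hu a Ha). specialize (Hl b Hb).
    rewrite fsize_single in Hu. rewrite fsize_cons. lia.
  - intros ws Hws p Hp. rewrite cop_t_Node in Hp.
    rewrite fsize_single, tsize_Node. destruct Hp as [<-|Hp].
    + cbn [fst snd]. rewrite fsize_single, tsize_Node. cbn. lia.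
    + apply in_map_iff in Hp as [q [<- Hq]]. cbn [fst snd].
      rewrite fsize_single, tsize_Node. specialize (Hws q Hq). unfold forest in *. lia.
Qed.

Lemma cop_head w :
  exists rest, cop w = (w, []) :: rest /\ forall p, In p rest -> snd p <> [].
Proof.
  apply (cop_ind (fun w L => exists rest, L = (w, []) :: rest /\
                                forall p, In p rest -> snd p <> [])).
  - exists []. split; [reflexivity | intros p []].
  - intros u l [rt [Ht Hrt]] [rl [Hl Hrl]]. rewrite cop_cons, Ht, Hl.
    eexists; split; [reflexivity|].
    intros p Hp. apply in_app_or in Hp as [Hp|Hp].
    + apply in_map_iff in Hp as [q [<- Hq]]. cbn. apply Hrl; auto.
    + apply In_cop_mul in Hp as [a [b [Ha [_ ->]]]]. cbn.
      intros E. apply app_eq_nil in E as [E _]. exact (Hrt a Ha E).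
  - intros ws _. rewrite cop_t_Node. eexists; split; [reflexivity|].
    intros p Hp. apply in_map_iff in Hp as [q [<- _]]. discriminate.
Qed.

Lemma sumL_cop_split (f : forest * forest -> R) w :
  exists rest, sumL f (cop w) = f (w, []) + sumL f rest /\
     forall p, In p rest -> (fsize (fst p) < fsize w)%nat.
Proof.
  destruct (cop_head w) as [rest [H1 H2]]. exists rest. rewrite H1. split; [reflexivity|].
  intros p Hp. assert (Hin : In p (cop w)) by (rewrite H1; now right).
  pose proof (size_cop w p Hin). pose proof (fsize_nonnil _ (H2 p Hp)). unfold forest in *. lia.
Qed.

Lemma counit_app a b : counit (a ++ b) = counit a * counit b.
Proof. destruct a, b; cbn; ring. Qed.

Lemma cop_counit_l w (beta : forest -> R) :
  sumL (fun p => counit (fst p) * beta (snd p)) (cop w) = beta w.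
Proof.
  revert beta. apply (cop_ind (fun w L => forall beta : forest -> R,
                         sumL (fun p => counit (fst p) * beta (snd p)) L = beta w)).
  - intros beta. cbn. ring.
  - intros u l Hu Hl beta. rewrite cop_cons, sumL_cop_mul.
    change (beta (u :: l)) with (beta ([u] ++ l)%list).
    rewrite <- (Hu (fun x => beta (x ++ l)%list)). apply sumL_ext. intros a _.
    rewrite <- (Hl (fun y => beta (snd a ++ y)%list)), <- sumL_scal_l.
    apply sumL_ext. intros q _. cbn. rewrite counit_app. ring.
  - intros ws Hws beta. rewrite cop_t_Node, sumL_cons, sumL_map. cbn.
    rewrite Rmult_0_l, Rplus_0_l. exact (Hws (fun x => beta [Node x])).
Qed.

Definition coassoc_lhs (L : list (forest * forest)) (F : forest -> forest -> forest -> R) :=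
  sumL (fun p => sumL (fun q => F (fst q) (snd q) (snd p)) (cop (fst p))) L.
Definition coassoc_rhs (L : list (forest * forest)) (F : forest -> forest -> forest -> R) :=
  sumL (fun p => sumL (fun q => F (fst p) (fst q) (snd q)) (cop (snd p))) L.

Lemma coassoc_lhs_mul A B F : coassoc_lhs (cop_mul A B) F =
  coassoc_lhs A (fun a b c => coassoc_lhs B (fun a' b' c' => F (a ++ a') (b ++ b') (c ++ c'))%list).
Proof.
  unfold coassoc_lhs. rewrite sumL_cop_mul. apply sumL_ext. intros x _.
  rewrite <- sumL_swap. apply sumL_ext. intros y _. unfold pair_app; cbn [fst snd].
  now rewrite cop_app, sumL_cop_mul.
Qed.

Lemma coassoc_rhs_mul A B F : coassoc_rhs (cop_mul A B) F =
  coassoc_rhs A (fun a b c => coassoc_rhs B (fun a' b' c' => F (a ++ a') (b ++ b') (c ++ c'))%list).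
Proof.
  unfold coassoc_rhs. rewrite sumL_cop_mul. apply sumL_ext. intros x _.
  rewrite <- sumL_swap. apply sumL_ext. intros y _. unfold pair_app; cbn [fst snd].
  now rewrite cop_app, sumL_cop_mul.
Qed.

Lemma coassoc w F : coassoc_lhs (cop w) F = coassoc_rhs (cop w) F.
Proof.
  revert F. apply (cop_ind (fun _ L => forall F, coassoc_lhs L F = coassoc_rhs L F)).
  - intros F. unfold coassoc_lhs, coassoc_rhs. cbn. ring.
  - intros u l Hu Hl F. rewrite cop_cons, coassoc_lhs_mul, coassoc_rhs_mul, Hu.
    unfold coassoc_rhs at 1 3. apply sumL_ext. intros a _. apply sumL_ext. intros b _.
    apply Hl.
  - intros ws Hws F. unfold coassoc_lhs, coassoc_rhs.
    rewrite cop_t_Node, !sumL_cons, !sumL_map. cbn [fst snd].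
    rewrite cop_single, cop_t_Node, sumL_cons, sumL_map. cbn [fst snd].
    rewrite (sumL_ext (fun x : forest * forest => sumL _ (cop [Node (snd x)]))
               (fun x => F (fst x) [Node (snd x)] [] +
                  sumL (fun q : forest * forest => F (fst x) (fst q) [Node (snd q)]) (cop (snd x)))).
    2:{ intros x _. now rewrite cop_single, cop_t_Node, sumL_cons, sumL_map. }
    rewrite sumL_plus. pose proof (Hws (fun a b c => F a b [Node c])) as E.
    unfold coassoc_lhs, coassoc_rhs in E. unfold forest in *. rewrite E. cbn. ring.
Qed.

(** * The convolution monoid of functionals on H_R *)

Lemma conv_sumL a b w : conv a b w = sumL (fun p => a (fst p) * b (snd p)) (cop w).
Proof. reflexivity. Qed.

Lemma conv_unit_l beta : conv counit beta = beta.
Proof. apply functional_extensionality; intro w. apply cop_counit_l. Qed.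

Lemma conv_unit_r alpha : conv alpha counit = alpha.
Proof.
  apply functional_extensionality; intro w. rewrite conv_sumL.
  destruct (cop_head w) as [rest [H1 H2]]. rewrite H1, sumL_cons. cbn.
  rewrite sumL_zero; [ring|]. intros [a [|t b]] Hp; specialize (H2 _ Hp); cbn in *;
    [congruence|ring].
Qed.

Lemma conv_assoc a b c : conv (conv a b) c = conv a (conv b c).
Proof.
  apply functional_extensionality; intro w. rewrite !conv_sumL.
  transitivity (coassoc_lhs (cop w) (fun x y z => a x * b y * c z)).
  - unfold coassoc_lhs. apply sumL_ext. intros p _. now rewrite conv_sumL, <- sumL_scal_r.
  - rewrite coassoc. unfold coassoc_rhs. apply sumL_ext. intros p _.
    rewrite conv_sumL, <- sumL_scal_l. apply sumL_ext. intros; ring.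
Qed.

Lemma conv_minus_l a b c w : conv (fun x => a x - b x) c w = conv a c w - conv b c w.
Proof. rewrite !conv_sumL, <- sumL_minus. apply sumL_ext; intros; ring. Qed.

(* A functional psi with psi(1) = 1 is right-cancellable: d * psi = 0
   forces d = 0, by induction on the size (Delta w = w (x) 1 + smaller terms). *)
Lemma conv_right_cancel d psi :
  psi [] = 1 -> (forall w, conv d psi w = 0) -> forall w, d w = 0.
Proof.
  intros H1 H2.
  assert (Hsize : forall n w, (fsize w <= n)%nat -> d w = 0).
  { induction n as [|n IH]; intros w Hw;
      destruct (sumL_cop_split (fun p => d (fst p) * psi (snd p)) w) as [rest [E Hr]];
      specialize (H2 w); rewrite conv_sumL, E in H2; cbn in H2;
      rewrite H1, sumL_zero in H2; try lra; intros p Hp; specialize (Hr p Hp).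
    - lia.
    - rewrite IH; [ring | lia]. }
  intros w. apply (Hsize (fsize w)). lia.
Qed.

Lemma conv_inverse_right inv psi :
  psi [] = 1 -> (forall w, conv inv psi w = counit w) -> conv psi inv = counit.
Proof.
  intros H1 H2.
  assert (Hinv : conv inv psi = counit) by (apply functional_extensionality; auto).
  assert (Hdiff : forall w, conv psi inv w - counit w = 0).
  { apply (conv_right_cancel (fun w => conv psi inv w - counit w) psi H1). intros w.
    rewrite conv_minus_l, conv_assoc, Hinv, conv_unit_r, conv_unit_l. ring. }
  apply functional_extensionality; intro w. specialize (Hdiff w). lra.
Qed.

Definition grade_twist (c : R) (a : forest -> R) (x : forest) : R :=
  exp (c * INR (fsize x)) * a x.

Lemma grade_twist_conv c a b : conv (grade_twist c a) (grade_twist c b) = grade_twist c (conv a b).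
Proof.
  apply functional_extensionality; intro w. unfold grade_twist.
  rewrite !conv_sumL, <- sumL_scal_l. apply sumL_ext. intros p Hp.
  rewrite <- (size_cop w p Hp), plus_INR, Rmult_plus_distr_l, exp_plus. ring.
Qed.

Lemma grade_twist_counit c : grade_twist c counit = counit.
Proof.
  apply functional_extensionality; intros [|t w]; unfold grade_twist; cbn.
  - rewrite Rmult_0_r, exp_0. ring.
  - ring.
Qed.

Lemma conv_pow_comm s k : conv (conv_pow s k) s = conv s (conv_pow s k).
Proof.
  induction k as [|k IH]; cbn.
  - now rewrite conv_unit_l, conv_unit_r.
  - now rewrite conv_assoc, IH.
Qed.

Lemma conv_pow_vanish s : s [] = 0 ->
  forall n w, (fsize w < n)%nat -> conv_pow s n w = 0.
Proof.
  intros Hs0 n. induction n as [|n IH]; intros w Hw; [lia|].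
  cbn [conv_pow]. rewrite conv_sumL. apply sumL_zero. intros p Hp.
  pose proof (size_cop w p Hp) as Hsize.
  destruct (fst p) as [|t l] eqn:E.
  - rewrite Hs0. ring.
  - assert (1 <= fsize (t :: l))%nat by (apply fsize_nonnil; discriminate).
    rewrite IH; [ring|]. unfold forest in *. lia.
Qed.

Lemma phi_rescale F s a z : 0 < s ->
  phi F (s * exp a) z = grade_twist (- (z * a)) (phi F s z).
Proof.
  intros Hs. apply functional_extensionality; intro x. unfold phi, grade_twist, Rpower.
  rewrite ln_mult, ln_exp by (auto; apply exp_pos).
  rewrite <- Rmult_assoc, <- exp_plus. f_equal. f_equal. ring.
Qed.

Lemma phi_unit F s z : phi F s z [] = 1.
Proof. unfold phi, Rpower. cbn. rewrite Rmult_0_r, Ropp_0, Rmult_0_l, exp_0. ring. Qed.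

Lemma phi_R_group_law F mu z inv a b : 0 < mu ->
  (forall w, conv inv (phi F mu z) w = counit w) ->
  conv inv (phi F (mu * exp (a + b)) z) =
  conv (conv inv (phi F (mu * exp a) z))
       (grade_twist (- (z * a)) (conv inv (phi F (mu * exp b) z))).
Proof.
  intros Hmu Hinv.
  assert (Hab : phi F (mu * exp (a + b)) z = grade_twist (- (z * a)) (phi F (mu * exp b) z)).
  { rewrite exp_plus, (Rmult_comm (exp a)), <- Rmult_assoc.
    apply phi_rescale. apply Rmult_lt_0_compat; auto; apply exp_pos. }
  assert (Hr : conv (phi F mu z) inv = counit) by (apply conv_inverse_right; auto; apply phi_unit).
  rewrite <- grade_twist_conv, <- Hab, (phi_rescale F mu a z Hmu).
  rewrite conv_assoc, <- (conv_assoc (grade_twist _ (phi F mu z))), grade_twist_conv, Hr,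
    grade_twist_counit, conv_unit_l. reflexivity.
Qed.

Lemma fprod_cons G t w : fprod G (t :: w) = tprod G t * fprod G w.
Proof. reflexivity. Qed.

Lemma tprod_Node G ws : tprod G (Node ws) = G (S (fsize ws)) * fprod G ws.
Proof. rewrite <- tsize_Node. reflexivity. Qed.

Lemma phi_Node F s z w :
  phi F s z [Node w] = Rpower s (- z) * F (z * INR (S (fsize w))) * phi F s z w.
Proof.
  unfold phi. rewrite fsize_single, tsize_Node, fprod_cons, tprod_Node.
  replace (- (z * INR (S (fsize w)))) with (- z + - (z * INR (fsize w))) by (rewrite S_INR; ring).
  rewrite Rpower_plus. cbn [fprod fold_right]. ring.
Qed.

Definition lim0 (f : R -> R) (l : R) : Prop := limit1_in f (fun z => 0 < z) l 0.

Lemma lim0_def f l : lim0 f l <->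
  forall eps, 0 < eps -> exists d, 0 < d /\ forall z, 0 < z < d -> Rabs (f z - l) < eps.
Proof.
  unfold lim0, limit1_in, limit_in. cbn. unfold R_dist. split.
  - intros H eps He. destruct (H eps He) as [d [Hd H1]]. exists d; split; auto.
    intros z Hz. apply H1. split; [lra|]. rewrite Rminus_0_r, Rabs_right; lra.
  - intros H eps He. destruct (H eps He) as [d [Hd H1]]. exists d; split; auto.
    intros z [Hz1 Hz2]. apply H1. rewrite Rminus_0_r, Rabs_right in Hz2; lra.
Qed.

Lemma lim0_const c : lim0 (fun _ => c) c.
Proof.
  apply lim0_def. intros eps He. exists 1. split; [lra|].
  intros. rewrite Rminus_diag, Rabs_R0; auto.
Qed.

Lemma lim0_id : lim0 (fun z => z) 0.
Proof. apply lim_x. Qed.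

Lemma lim0_plus f g l l' : lim0 f l -> lim0 g l' -> lim0 (fun z => f z + g z) (l + l').
Proof. apply limit_plus. Qed.

Lemma lim0_minus f g l l' : lim0 f l -> lim0 g l' -> lim0 (fun z => f z - g z) (l - l').
Proof. apply limit_minus. Qed.

Lemma lim0_mult f g l l' : lim0 f l -> lim0 g l' -> lim0 (fun z => f z * g z) (l * l').
Proof. apply limit_mul. Qed.

Lemma lim0_scal c f l : lim0 f l -> lim0 (fun z => c * f z) (c * l).
Proof. intros. apply lim0_mult; auto. apply lim0_const. Qed.

Lemma lim0_div f g l l' : lim0 f l -> lim0 g l' -> l' <> 0 -> lim0 (fun z => f z / g z) (l / l').
Proof. intros. unfold Rdiv. apply lim0_mult; auto. now apply limit_inv. Qed.

Lemma lim0_pow f l n : lim0 f l -> lim0 (fun z => f z ^ n) (l ^ n).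
Proof. intros H. induction n; cbn; [apply lim0_const | now apply lim0_mult]. Qed.

Lemma lim0_ext f g l :
  (exists d, 0 < d /\ forall z, 0 < z < d -> f z = g z) -> lim0 f l -> lim0 g l.
Proof.
  intros [d0 [Hd0 E]] H. rewrite lim0_def in *. intros eps He.
  destruct (H eps He) as [d [Hd H1]]. exists (Rmin d d0). split; [now apply Rmin_pos|].
  intros z Hz. pose proof (Rmin_l d d0); pose proof (Rmin_r d d0).
  rewrite <- E by lra. apply H1. lra.
Qed.

Lemma lim0_ext_pos f g l : (forall z, 0 < z -> f z = g z) -> lim0 f l -> lim0 g l.
Proof. intros E. apply lim0_ext. exists 1. split; [lra|]. intros; apply E; lra. Qed.

Lemma lim0_unique f l l' : lim0 f l -> lim0 f l' -> l = l'.
Proof.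
  apply single_limit. unfold adhDa. intros alp Ha. exists (alp / 2). cbn. unfold R_dist.
  split; [lra|]. rewrite Rminus_0_r, Rabs_right; lra.
Qed.

Lemma lim0_comp f g l : lim0 f l -> continuity_pt g l -> lim0 (fun z => g (f z)) (g l).
Proof.
  intros H Hc. rewrite lim0_def in *. intros eps He.
  destruct (Hc eps He) as [d1 [Hd1 H1]]. destruct (H d1 Hd1) as [d [Hd H2]].
  exists d; split; auto. intros z Hz. destruct (Req_dec (f z) l) as [E|E].
  - rewrite E, Rminus_diag, Rabs_R0; auto.
  - apply (H1 (f z)). split; [split; [exact I | auto]|]. cbn. unfold R_dist. now apply H2.
Qed.

Lemma lim0_exp_lin c : lim0 (fun z => exp (z * c)) 1.
Proof.
  rewrite <- exp_0. apply (lim0_comp (fun z => z * c) exp 0).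
  - rewrite <- (Rmult_0_l c). apply lim0_mult; [apply lim0_id | apply lim0_const].
  - apply derivable_continuous_pt. exists (exp 0). apply derivable_pt_lim_exp.
Qed.

Lemma lim0_sumL {A} (F : R -> A -> R) (G : A -> R) l :
  (forall x, In x l -> lim0 (fun z => F z x) (G x)) -> lim0 (fun z => sumL (F z) l) (sumL G l).
Proof.
  induction l as [|a l IH]; intros H; [apply (lim0_const 0)|].
  apply lim0_plus; [apply H; now left|]. apply IH. intros; apply H; now right.
Qed.

Lemma lim0_sum_lt n (F : R -> nat -> R) G :
  (forall j, (j < n)%nat -> lim0 (fun z => F z j) (G j)) ->
  lim0 (fun z => sum_lt n (F z)) (sum_lt n G).
Proof.
  revert F G; induction n; intros F G H; [apply (lim0_const 0)|].
  apply lim0_plus; [apply H; lia|].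
  apply (IHn (fun z j => F z (S j)) (fun j => G (S j))). intros; apply H; lia.
Qed.

Lemma lim0_nonzero f l : lim0 f l -> l <> 0 ->
  exists d, 0 < d /\ forall z, 0 < z < d -> f z <> 0.
Proof.
  intros H Hl. rewrite lim0_def in H. destruct (H (Rabs l) (Rabs_pos_lt _ Hl)) as [d [Hd H1]].
  exists d; split; auto. intros z Hz E. specialize (H1 z Hz).
  rewrite E, Rminus_0_l, Rabs_Ropp in H1. lra.
Qed.

Lemma lim0_squeeze f g : lim0 g 0 ->
  (exists d, 0 < d /\ forall z, 0 < z < d -> Rabs (f z) <= g z) -> lim0 f 0.
Proof.
  intros Hg [d0 [Hd0 Hb]]. rewrite lim0_def in *. intros eps He.
  destruct (Hg eps He) as [d [Hd H]]. exists (Rmin d d0). split; [now apply Rmin_pos|].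
  intros z Hz. pose proof (Rmin_l d d0); pose proof (Rmin_r d d0).
  specialize (H z ltac:(lra)). specialize (Hb z ltac:(lra)). rewrite Rminus_0_r in *.
  pose proof (Rle_abs (g z)). lra.
Qed.

(* tau(z, b) = (e^{-zb} - 1) / z, so that e^{-zbm} = (1 + z tau)^m; tau -> -b as z -> 0. *)
Definition tau (z b : R) : R := (exp (- (z * b)) - 1) / z.

Lemma tau_lim b : lim0 (fun z => tau z b) (- b).
Proof.
  assert (Dlin : derivable_pt_lim (fun t => - (t * b)) 0 (- b)).
  { replace (fun t => - (t * b)) with (mult_real_fct (- b) id)
      by (apply functional_extensionality; intros; unfold mult_real_fct, id; ring).
    rewrite <- (Rmult_1_r (- b)) at 2. apply derivable_pt_lim_scal, derivable_pt_lim_id. }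
  pose proof (derivable_pt_lim_comp _ exp 0 _ _ Dlin (derivable_pt_lim_exp _)) as D.
  rewrite Rmult_0_l, Ropp_0, exp_0, Rmult_1_l in D.
  rewrite lim0_def. intros eps He. destruct (D eps He) as [d Hd].
  exists d. split; [apply cond_pos|]. intros z [Hz1 Hz2].
  assert (Hz : Rabs z < d) by (rewrite Rabs_right; lra).
  specialize (Hd z ltac:(lra) Hz). unfold comp in Hd.
  rewrite Rplus_0_l, Rmult_0_l, Ropp_0, exp_0 in Hd. exact Hd.
Qed.

(** * Forward differences and Newton's interpolation formula *)

Definition fwd_diff (h : R -> R) (x : R) : R := h (x + 1) - h x.

Fixpoint iter_diff (i : nat) (h : R -> R) : R -> R :=
  match i with O => h | S k => iter_diff k (fwd_diff h) end.

Lemma iter_diff_ext i h g : (forall x, h x = g x) -> forall x, iter_diff i h x = iter_diff i g x.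
Proof.
  revert h g; induction i; intros h g H x; cbn; auto.
  apply IHi. intros y. unfold fwd_diff. now rewrite !H.
Qed.

Lemma iter_diff_sum_lt i n (c : nat -> R) (H : nat -> R -> R) x :
  iter_diff i (fun y => sum_lt n (fun j => c j * H j y)) x =
  sum_lt n (fun j => c j * iter_diff i (H j) x).
Proof.
  revert H x; induction i; intros H x; cbn; auto.
  rewrite (iter_diff_ext i _ (fun y => sum_lt n (fun j => c j * fwd_diff (H j) y))).
  - apply IHi.
  - intros y. unfold fwd_diff. rewrite <- sum_lt_minus. apply sum_lt_ext. intros; ring.
Qed.

Lemma iter_diff_lin i a b h g x :
  iter_diff i (fun y => a * h y + b * g y) x = a * iter_diff i h x + b * iter_diff i g x.
Proof.
  revert h g x; induction i; intros h g x; cbn; auto.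
  rewrite (iter_diff_ext i _ (fun y => a * fwd_diff h y + b * fwd_diff g y)).
  - apply IHi.
  - intros y. unfold fwd_diff. ring.
Qed.

Lemma iter_diff_scal i c h x : iter_diff i (fun y => c * h y) x = c * iter_diff i h x.
Proof.
  rewrite (iter_diff_ext i _ (fun y => c * h y + 0 * h y)) by (intros; ring).
  rewrite iter_diff_lin. ring.
Qed.

Lemma iter_diff_shift i h x : iter_diff i (fun y => h (y + 1)) x = iter_diff i h (x + 1).
Proof.
  revert h x; induction i; intros h x; cbn; auto.
  rewrite (iter_diff_ext i _ (fun y => fwd_diff h (y + 1))); [apply IHi | reflexivity].
Qed.

Lemma iter_diff_S i h x : iter_diff (S i) h x = iter_diff i h (x + 1) - iter_diff i h x.
Proof.
  cbn. unfold fwd_diff at 1.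
  rewrite (iter_diff_ext i _ (fun y => 1 * h (y + 1) + (-1) * h y)) by (intros; ring).
  rewrite iter_diff_lin, iter_diff_shift. ring.
Qed.

Lemma iter_diff_exp i c x : iter_diff i (fun y => exp (c * y)) x = exp (c * x) * (exp c - 1) ^ i.
Proof.
  revert x; induction i; intros x; [cbn; ring|].
  rewrite iter_diff_S, !IHi, Rmult_plus_distr_l, Rmult_1_r, exp_plus. cbn. ring.
Qed.

Lemma fwd_diff_pow j d y :
  fwd_diff (fun y => (y + d) ^ j) y = sum_lt j (fun l => C j l * (y + d) ^ l).
Proof.
  unfold fwd_diff. replace (y + 1 + d) with ((y + d) + 1) by ring.
  rewrite binomial, sum_f_R0_sum_lt, sum_lt_S_r, Nat.sub_diag.
  assert (Cjj : C j j = 1).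
  { unfold C. rewrite Nat.sub_diag. cbn. field. apply INR_fact_neq_0. }
  rewrite Cjj, (sum_lt_ext j _ (fun l => C j l * (y + d) ^ l)).
  - cbn. ring.
  - intros l _. rewrite pow1. ring.
Qed.

Lemma iter_diff_pow i : forall j d x,
  ((j < i)%nat -> iter_diff i (fun y => (y + d) ^ j) x = 0) /\
  iter_diff i (fun y => (y + d) ^ i) x = INR (Factorial.fact i).
Proof.
  induction i as [|i IH]; intros j d x; [split; [lia | reflexivity]|].
  assert (Hstep : forall k, iter_diff (S i) (fun y => (y + d) ^ k) x =
                   sum_lt k (fun l => C k l * iter_diff i (fun y => (y + d) ^ l) x)).
  { intros k. cbn. rewrite (iter_diff_ext i _ (fun y => sum_lt k (fun l => C k l * (y + d) ^ l))).
    - apply iter_diff_sum_lt.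
    - intros; apply fwd_diff_pow. }
  split.
  - intros Hj. rewrite Hstep. apply sum_lt_zero. intros l Hl.
    rewrite (proj1 (IH l d x)) by lia. ring.
  - rewrite Hstep, (sum_lt_single (S i) i); [| lia |].
    + assert (HC : C (S i) i = INR (S i)).
      { unfold C. replace (S i - i)%nat with 1%nat by lia.
        rewrite fact_simpl, mult_INR. replace (INR (Factorial.fact 1)) with 1 by reflexivity.
        field. apply INR_fact_neq_0. }
      rewrite (proj2 (IH 0%nat d x)), HC, fact_simpl, mult_INR. reflexivity.
    + intros l Hl Hne. rewrite (proj1 (IH l d x)) by lia. ring.
Qed.

Lemma iter_diff_bound i : forall h x K,
  (forall l, (l <= i)%nat -> Rabs (h (x + INR l)) <= K) -> Rabs (iter_diff i h x) <= 2 ^ i * K.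
Proof.
  induction i as [|i IH]; intros h x K H.
  - specialize (H 0%nat (le_n 0)). cbn in *. rewrite Rplus_0_r in H. lra.
  - cbn. replace (2 * 2 ^ i * K) with (2 ^ i * (2 * K)) by ring. apply IH.
    intros l Hl. unfold fwd_diff.
    pose proof (H (S l) ltac:(lia)) as H1. pose proof (H l ltac:(lia)) as H2.
    rewrite S_INR, <- Rplus_assoc in H1.
    pose proof (Rabs_triang (h (x + INR l + 1)) (- h (x + INR l))) as T.
    rewrite Rabs_Ropp in T. unfold Rminus. lra.
Qed.

Lemma iter_diff_lim0 i : forall (H : R -> R -> R) h,
  (forall x, lim0 (fun z => H z x) (h x)) ->
  forall x, lim0 (fun z => iter_diff i (H z) x) (iter_diff i h x).
Proof.
  induction i; intros H h Hc x; cbn; auto.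
  apply (IHi (fun z => fwd_diff (H z)) (fwd_diff h)). intros y. now apply lim0_minus.
Qed.

Fixpoint binomR (m : nat) (j : nat) {struct m} : R :=
  match j with
  | O => 1
  | S j' => match m with O => 0 | S m' => binomR m' j' + binomR m' j end
  end.

Lemma binomR_gt m j : (m < j)%nat -> binomR m j = 0.
Proof.
  revert j; induction m; intros j Hj; destruct j; try lia; cbn; auto.
  rewrite !IHm by lia. ring.
Qed.

Lemma binomR_0_r m : binomR m 0 = 1.
Proof. now destruct m. Qed.

Lemma binomR_1 m : binomR m 1 = INR m.
Proof. induction m; cbn; auto. rewrite IHm. destruct m; cbn; ring. Qed.

Lemma newton m : forall h N, (m <= N)%nat ->
  h (INR m) = sum_lt (S N) (fun j => binomR m j * iter_diff j h 0).
Proof.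
  induction m as [|m IH]; intros h N HN.
  - cbn [sum_lt]. rewrite sum_lt_zero; [cbn; ring|]. intros j _. cbn. ring.
  - destruct N as [|N]; [lia|].
    rewrite S_INR, (IH (fun x => h (x + 1)) (S N)) by lia.
    rewrite (sum_lt_ext _ _ (fun j => binomR m j * iter_diff j h 0 +
                                       binomR m j * iter_diff (S j) h 0)).
    2:{ intros j _. rewrite iter_diff_shift, iter_diff_S, Rplus_0_l. ring. }
    rewrite sum_lt_plus, (sum_lt_S_r (S N) (fun j => binomR m j * iter_diff (S j) h 0)),
      (binomR_gt m (S N)) by lia.
    change (sum_lt (S (S N)) (fun j => binomR (S m) j * iter_diff j h 0)) with
      (binomR (S m) 0 * iter_diff 0 h 0 +
       sum_lt (S N) (fun j => binomR (S m) (S j) * iter_diff (S j) h 0)).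
    change (sum_lt (S (S N)) (fun j => binomR m j * iter_diff j h 0)) with
      (binomR m 0 * iter_diff 0 h 0 + sum_lt (S N) (fun j => binomR m (S j) * iter_diff (S j) h 0)).
    rewrite (sum_lt_ext (S N) (fun j => binomR (S m) (S j) * iter_diff (S j) h 0)
               (fun j => binomR m j * iter_diff (S j) h 0 + binomR m (S j) * iter_diff (S j) h 0)).
    2:{ intros j _. cbn [binomR]. ring. }
    rewrite sum_lt_plus, !binomR_0_r. ring.
Qed.

Lemma sumL_newton {A} (l : list A) (c : A -> R) (s : A -> nat) N (h : R -> R) :
  (forall x, In x l -> (s x <= N)%nat) ->
  sumL (fun x => c x * h (INR (s x))) l =
  sum_lt (S N) (fun j => iter_diff j h 0 * sumL (fun x => c x * binomR (s x) j) l).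
Proof.
  intros Hs.
  rewrite (sumL_ext _ (fun x => sum_lt (S N) (fun j => (c x * iter_diff j h 0) * binomR (s x) j))).
  - rewrite sum_lt_sumL. apply sum_lt_ext. intros j _.
    rewrite <- sumL_scal_l. apply sumL_ext. intros; ring.
  - intros x Hx. rewrite (newton (s x) h N (Hs x Hx)), <- sum_lt_scal.
    apply sum_lt_ext. intros; ring.
Qed.

Fixpoint padd (p q : list R) : list R :=
  match p, q with
  | [], q => q
  | p, [] => p
  | a :: p', b :: q' => (a + b) :: padd p' q'
  end.

Definition pscale (c : R) (p : list R) : list R := map (Rmult c) p.

Fixpoint pderiv (p : list R) : list R :=
  match p with [] => [] | a :: p' => padd p' (0 :: pderiv p') end.

Lemma peval_padd p q x : peval (padd p q) x = peval p x + peval q x.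
Proof. revert q; induction p; intros q; destruct q; simpl; try ring. rewrite IHp. ring. Qed.

Lemma nth_padd p q k : nth k (padd p q) 0 = nth k p 0 + nth k q 0.
Proof.
  revert q k; induction p; intros q k; destruct q; destruct k; simpl; try ring; auto;
  destruct k; simpl; ring.
Qed.

Lemma peval_pscale c p x : peval (pscale c p) x = c * peval p x.
Proof. induction p as [|a p IH]; simpl; [ring|]. unfold pscale in *. simpl. rewrite IH. ring. Qed.

Lemma nth_pscale c p k : nth k (pscale c p) 0 = c * nth k p 0.
Proof. revert k; induction p; intros k; destruct k; simpl; try ring; auto. Qed.

Lemma peval_at0 q : peval q 0 = nth 0 q 0.
Proof. destruct q; cbn; ring. Qed.

Lemma peval_deriv p x : derivable_pt_lim (peval p) x (peval (pderiv p) x).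
Proof.
  induction p as [|a p IH]; [apply (derivable_pt_lim_const 0)|].
  cbn [pderiv]. rewrite peval_padd.
  replace (peval (a :: p)) with (fct_cte a + (id * peval p))%F by reflexivity.
  replace (peval p x + peval (0 :: pderiv p) x)
    with (0 + (1 * peval p x + id x * peval (pderiv p) x)) by (simpl; unfold id; ring).
  apply derivable_pt_lim_plus; [apply derivable_pt_lim_const|].
  apply derivable_pt_lim_mult; auto. apply derivable_pt_lim_id.
Qed.

Lemma nth_pderiv p k : nth k (pderiv p) 0 = INR (S k) * nth (S k) p 0.
Proof.
  revert k; induction p as [|a p IH]; intros k; [destruct k; cbn; ring|].
  cbn [pderiv]. rewrite nth_padd. destruct k as [|k]; [cbn; ring|].
  cbn [nth]. rewrite IH, (S_INR (S k)). ring.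
Qed.

Lemma peval_zero_coef p : (forall x, peval p x = 0) -> forall j, nth j p 0 = 0.
Proof.
  induction p as [|a p IH]; intros H j; [now destruct j|].
  assert (Ha : a = 0) by (specialize (H 0); simpl in H; lra).
  assert (Hnz : forall x, x <> 0 -> peval p x = 0).
  { intros x Hx. specialize (H x). simpl in H. rewrite Ha in H.
    assert (Hprod : x * peval p x = 0) by lra.
    destruct (Rmult_integral _ _ Hprod); [contradiction | assumption]. }
  assert (Hp : forall x, peval p x = 0).
  { intros x. destruct (Req_dec x 0) as [->|Hx]; auto.
    destruct (Req_dec (peval p 0) 0) as [E|E]; auto. exfalso.
    assert (Hc : continuity_pt (peval p) 0).
    { apply derivable_continuous_pt. eexists. apply peval_deriv. }
    destruct (Hc (Rabs (peval p 0)) (Rabs_pos_lt _ E)) as [d [Hd Hd2]].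
    specialize (Hd2 (d / 2)). cbn in Hd2. unfold R_dist in Hd2.
    rewrite Hnz, Rminus_0_l, Rabs_Ropp, Rminus_0_r in Hd2 by lra.
    assert (Rabs (d / 2) < d) by (rewrite Rabs_right; lra).
    assert (Rabs (peval p 0) < Rabs (peval p 0)) by (apply Hd2; repeat split; auto; lra).
    lra. }
  destruct j; cbn; auto.
Qed.

Lemma coef_eq p q : (forall x, peval p x = peval q x) -> forall j, nth j p 0 = nth j q 0.
Proof.
  intros H j.
  assert (Hdiff : forall x, peval (padd p (pscale (-1) q)) x = 0)
    by (intros; rewrite peval_padd, peval_pscale, H; ring).
  pose proof (peval_zero_coef _ Hdiff j) as U. rewrite nth_padd, nth_pscale in U. lra.
Qed.

Lemma coef_sumL {A} p (l : list A) (q : A -> list R) (c : A -> R) :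
  (forall x, peval p x = sumL (fun y => peval (q y) x * c y) l) ->
  forall k, nth k p 0 = sumL (fun y => nth k (q y) 0 * c y) l.
Proof.
  intros H k.
  set (r := fold_right (fun y acc => padd (pscale (c y) (q y)) acc) [] l).
  assert (Hr : forall x, peval r x = sumL (fun y => peval (q y) x * c y) l).
  { intros x. unfold r. clear. induction l as [|a l IH]; simpl; [reflexivity|].
    rewrite peval_padd, peval_pscale, IH. unfold sumL; cbn. ring. }
  assert (Hn : nth k r 0 = sumL (fun y => nth k (q y) 0 * c y) l).
  { unfold r. clear. induction l as [|a l IH]; simpl; [now destruct k|].
    rewrite nth_padd, nth_pscale, IH. unfold sumL; cbn. ring. }
  rewrite <- Hn. apply coef_eq. intros; now rewrite H, Hr.
Qed.

Lemma coef_sum_lt p n (al : nat -> R) :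
  (forall x, peval p x = sum_lt n (fun j => al j * x ^ j)) ->
  forall j, (j < n)%nat -> nth j p 0 = al j.
Proof.
  intros H j Hj.
  assert (Hr : forall n (al : nat -> R) x,
             peval (map al (seq 0 n)) x = sum_lt n (fun j => al j * x ^ j)).
  { clear. induction n; intros al x; simpl; [reflexivity|].
    rewrite <- seq_shift, map_map, IHn, <- sum_lt_scal. f_equal; [ring|].
    apply sum_lt_ext. intros; cbn; ring. }
  rewrite (coef_eq p (map al (seq 0 n))) by (intros; now rewrite Hr, H).
  rewrite nth_indep with (d' := al 0%nat) by now rewrite length_map, length_seq.
  now rewrite map_nth, seq_nth.
Qed.

Lemma derivable_pt_lim_sumL {A} (Fn : A -> R -> R) (D : A -> R) l y :
  (forall x, In x l -> derivable_pt_lim (Fn x) y (D x)) ->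
  derivable_pt_lim (fun b => sumL (fun x => Fn x b) l) y (sumL D l).
Proof.
  induction l as [|a l IH]; intros H; [apply (derivable_pt_lim_const 0)|].
  replace (fun b => sumL (fun x => Fn x b) (a :: l))
    with (Fn a + (fun b => sumL (fun x => Fn x b) l))%F by reflexivity.
  rewrite sumL_cons. apply derivable_pt_lim_plus.
  - apply H; now left.
  - apply IH. intros; apply H; now right.
Qed.

(** * Limits of solutions of an asymptotically triangular linear system *)

Lemma eliminate_first_unknown (m : nat -> nat -> R) (k d : nat -> R) n i :
  m 0%nat 0%nat <> 0 ->
  d 0%nat = sum_lt (S n) (fun j => m 0%nat j * k j) ->
  d (S i) = sum_lt (S n) (fun j => m (S i) j * k j) ->
  d (S i) - m (S i) 0%nat * d 0%nat / m 0%nat 0%nat =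
  sum_lt n (fun j => (m (S i) (S j) - m (S i) 0%nat * m 0%nat (S j) / m 0%nat 0%nat) * k (S j)).
Proof.
  intros H00 Hrow0 Hrowi.
  rewrite (sum_lt_ext n _ (fun j => m (S i) (S j) * k (S j) -
              (m (S i) 0%nat / m 0%nat 0%nat) * (m 0%nat (S j) * k (S j))))
    by (intros; field; auto).
  rewrite sum_lt_minus, sum_lt_scal, Hrowi, Hrow0. cbn [sum_lt]. field. auto.
Qed.

Lemma lim0_eliminate f g h e l l' l'' :
  lim0 f l -> lim0 g 0 -> lim0 h l' -> lim0 e l'' -> l'' <> 0 ->
  lim0 (fun z => f z - g z * h z / e z) l.
Proof.
  intros Hf Hg Hh He Hl''. replace l with (l - 0 * l' / l'') by (field; auto).
  apply lim0_minus; [exact Hf|]. apply lim0_div; auto. now apply lim0_mult.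
Qed.

(* Proof: eliminate K_0 with the first row (M_00(z) is eventually
   nonzero) and recurse on the remaining n x n system. *)
Lemma triangular_limits n : forall (M : R -> nat -> nat -> R) (K d : R -> nat -> R)
    (M0 : nat -> nat -> R) (d0 : nat -> R),
  (exists de, 0 < de /\ forall z, 0 < z < de ->
     forall i, (i < n)%nat -> d z i = sum_lt n (fun j => M z i j * K z j)) ->
  (forall i j, (i < n)%nat -> (j < n)%nat -> lim0 (fun z => M z i j) (M0 i j)) ->
  (forall i, (i < n)%nat -> lim0 (fun z => d z i) (d0 i)) ->
  (forall i j, (j < i)%nat -> (i < n)%nat -> M0 i j = 0) ->
  (forall i, (i < n)%nat -> M0 i i <> 0) ->
  exists Kl : nat -> R, forall j, (j < n)%nat -> lim0 (fun z => K z j) (Kl j).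
Proof.
  induction n as [|n IH]; intros M K d M0 d0 [de [Hde Hsys]] HM Hd Htri Hdiag.
  { exists (fun _ => 0). intros; lia. }
  destruct (lim0_nonzero _ _ (HM 0%nat 0%nat ltac:(lia) ltac:(lia)) (Hdiag 0%nat ltac:(lia)))
    as [d1 [Hd1 Hnz]].
  assert (Hnear : forall z, 0 < z < Rmin de d1 -> 0 < z < de /\ M z 0%nat 0%nat <> 0).
  { intros z Hz. pose proof (Rmin_l de d1); pose proof (Rmin_r de d1).
    split; [lra | apply Hnz; lra]. }
  assert (Hcol0 : forall i, (i < n)%nat -> lim0 (fun z => M z (S i) 0%nat) 0).
  { intros i Hi. rewrite <- (Htri (S i) 0%nat) by lia. apply HM; lia. }
  destruct (IH (fun z i j => M z (S i) (S j) - M z (S i) 0%nat * M z 0%nat (S j) / M z 0%nat 0%nat)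
               (fun z j => K z (S j))
               (fun z i => d z (S i) - M z (S i) 0%nat * d z 0%nat / M z 0%nat 0%nat)
               (fun i j => M0 (S i) (S j)) (fun i => d0 (S i))) as [Kl HKl].
  - exists (Rmin de d1). split; [now apply Rmin_pos|]. intros z Hz i Hi.
    destruct (Hnear z Hz) as [Hz1 H00].
    apply (eliminate_first_unknown (M z) (K z) (d z)); auto; apply Hsys; auto; lia.
  - intros i k Hi Hk. apply (lim0_eliminate _ _ _ _ _ (M0 0%nat (S k)) (M0 0%nat 0%nat));
      auto; (apply HM || apply Hdiag); lia.
  - intros i Hi. apply (lim0_eliminate _ _ _ _ _ (d0 0%nat) (M0 0%nat 0%nat));
      auto; (apply Hd || apply HM || apply Hdiag); lia.
  - intros; apply Htri; lia.
  - intros; apply Hdiag; lia.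
  - (* back substitution in row 0 *)
    exists (fun j => match j with
                     | O => (d0 0%nat - sum_lt n (fun k => M0 0%nat (S k) * Kl k)) / M0 0%nat 0%nat
                     | S j => Kl j end).
    intros [|j] Hj; [|apply HKl; lia].
    apply (lim0_ext (fun z => (d z 0%nat - sum_lt n (fun k => M z 0%nat (S k) * K z (S k))) /
                               M z 0%nat 0%nat)).
    + exists (Rmin de d1). split; [now apply Rmin_pos|]. intros z Hz.
      destruct (Hnear z Hz) as [Hz1 H00].
      rewrite (Hsys z Hz1 0%nat) by lia. cbn [sum_lt]. field. auto.
    + apply lim0_div; [|apply HM; lia | apply Hdiag; lia].
      apply lim0_minus; [apply Hd; lia|]. apply lim0_sum_lt. intros k Hk.
      apply lim0_mult; [apply HM; lia | apply HKl; auto].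
Qed.

(** * Remainder of a convergent power series *)

Lemma infinite_sum_terms_bounded (s : nat -> R) l :
  infinite_sum s l -> exists B, forall n, Rabs (s n) <= B.
Proof.
  intros H. destruct (H 1 ltac:(lra)) as [N0 HN]. unfold R_dist in HN.
  set (S0 := sum_f_R0 (fun k => Rabs (s k)) N0).
  assert (Hhead : forall n, (n <= N0)%nat -> Rabs (s n) <= S0).
  { intros n Hn. unfold S0. clear HN H. induction N0 as [|N0 IH].
    - replace n with 0%nat by lia. cbn. lra.
    - cbn. pose proof (Rabs_pos (s (S N0))).
      assert (Hnn : forall m, 0 <= sum_f_R0 (fun k => Rabs (s k)) m).
      { intros m. apply cond_pos_sum. intros; apply Rabs_pos. }
      destruct (Nat.eq_dec n (S N0)) as [->|Hne]; [pose proof (Hnn N0); lra|].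
      specialize (IH ltac:(lia)). lra. }
  exists (2 + S0). intros n. destruct (Compare_dec.le_lt_dec n N0) as [Hn|Hn].
  - specialize (Hhead n Hn). lra.
  - destruct n as [|n]; [lia|].
    pose proof (HN (S n) ltac:(lia)) as H1. pose proof (HN n ltac:(lia)) as H2. cbn in H1.
    pose proof (Rabs_triang (sum_f_R0 s n + s (S n) - l) (- (sum_f_R0 s n - l))) as T.
    rewrite Rabs_Ropp in T. replace (sum_f_R0 s n + s (S n) - l + - (sum_f_R0 s n - l))
      with (s (S n)) in T by ring.
    pose proof (Hhead 0%nat ltac:(lia)). pose proof (Rabs_pos (s 0%nat)). lra.
Qed.

Lemma geometric_tail_bound (a : nat -> R) B q N :
  0 <= B -> 0 < q <= 1 / 2 -> (forall k, Rabs (a k) <= B * q ^ k) ->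
  forall i, Rabs (sum_f_R0 a (N + i) - sum_f_R0 a N) <= 2 * B * q ^ S N.
Proof.
  intros HB Hq Ha i.
  assert (Hstrong : Rabs (sum_f_R0 a (N + i) - sum_f_R0 a N) <= 2 * B * q ^ S N * (1 - (/ 2) ^ i)).
  { induction i as [|i IH].
    - rewrite Nat.add_0_r, Rminus_diag, Rabs_R0. cbn. lra.
    - rewrite Nat.add_succ_r. cbn [sum_f_R0].
      assert (Hqi : q ^ S (N + i) <= q ^ S N * (/ 2) ^ i).
      { replace (S (N + i)) with (S N + i)%nat by lia. rewrite pow_add.
        apply Rmult_le_compat_l; [apply pow_le; lra|]. apply pow_incr. lra. }
      pose proof (Ha (S (N + i))) as Hlast.
      pose proof (Rabs_triang (sum_f_R0 a (N + i) - sum_f_R0 a N) (a (S (N + i)))) as T.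
      replace (sum_f_R0 a (N + i) - sum_f_R0 a N + a (S (N + i)))
        with (sum_f_R0 a (N + i) + a (S (N + i)) - sum_f_R0 a N) in T by ring.
      assert (B * q ^ S (N + i) <= B * (q ^ S N * (/ 2) ^ i)) by (apply Rmult_le_compat_l; lra).
      rewrite <- (tech_pow_Rmult (/ 2) i). lra. }
  assert (0 <= (/ 2) ^ i) by (apply pow_le; lra).
  assert (0 <= B * q ^ S N) by (apply Rmult_le_pos; [lra | apply pow_le; lra]). nra.
Qed.

Lemma infinite_sum_tail_le (a : nat -> R) l N M :
  infinite_sum a l -> (forall i, Rabs (sum_f_R0 a (N + i) - sum_f_R0 a N) <= M) ->
  Rabs (l - sum_f_R0 a N) <= M.
Proof.
  intros Hl Hbound. apply Rnot_lt_le. intros Hlt.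
  destruct (Hl (Rabs (l - sum_f_R0 a N) - M) ltac:(lra)) as [N0 HN0]. unfold R_dist in HN0.
  specialize (HN0 (N + N0)%nat ltac:(lia)). specialize (Hbound N0).
  pose proof (Rabs_triang (sum_f_R0 a (N + N0) - l) (- (sum_f_R0 a (N + N0) - sum_f_R0 a N))) as T.
  rewrite Rabs_Ropp in T.
  replace (sum_f_R0 a (N + N0) - l + - (sum_f_R0 a (N + N0) - sum_f_R0 a N))
    with (- (l - sum_f_R0 a N)) in T by ring.
  rewrite Rabs_Ropp in T. lra.
Qed.

Lemma pser_remainder_bound (c : nat -> R) (G : R -> R) (r : R) (N : nat) :
  0 < r -> (forall y, 0 < y < r -> Pser c y (G y)) ->
  exists y0 B, 0 < y0 /\ forall y, 0 < y <= y0 ->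
    Rabs (G y - sum_lt (S N) (fun k => c k * y ^ k)) <= B * y ^ (S N).
Proof.
  intros Hr HG. set (x1 := r / 2).
  assert (Hx1 : 0 < x1 < r) by (unfold x1; lra).
  destruct (infinite_sum_terms_bounded _ _ (HG x1 Hx1)) as [B1 HB1].
  assert (HB1p : 0 <= B1) by (specialize (HB1 0%nat); pose proof (Rabs_pos (c 0%nat * x1 ^ 0)); lra).
  exists (x1 / 2), (2 * B1 / x1 ^ (S N)). split; [lra|]. intros y Hy.
  set (q := y / x1).
  assert (Hq : 0 < q <= 1 / 2).
  { unfold q. split; [apply Rdiv_lt_0_compat; lra|].
    apply (Rmult_le_reg_r x1); [lra|]. unfold Rdiv. rewrite Rmult_assoc, Rinv_l; lra. }
  assert (Hterm : forall k, Rabs (c k * y ^ k) <= B1 * q ^ k).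
  { intros k. replace (c k * y ^ k) with ((c k * x1 ^ k) * q ^ k).
    - rewrite Rabs_mult, (Rabs_right (q ^ k)) by (apply Rle_ge, pow_le; lra).
      apply Rmult_le_compat_r; [apply pow_le; lra | apply HB1].
    - unfold q. replace (y ^ k) with ((x1 * (y / x1)) ^ k) by (f_equal; field; lra).
      rewrite Rpow_mult_distr. ring. }
  replace (2 * B1 / x1 ^ S N * y ^ S N) with (2 * B1 * q ^ S N)
    by (unfold q, Rdiv; rewrite Rpow_mult_distr, pow_inv; ring).
  rewrite <- sum_f_R0_sum_lt.
  apply infinite_sum_tail_le; [apply HG; lra|].
  now apply geometric_tail_bound.
Qed.

Lemma scaled_diff_remainder_lim (Rm : R -> R) N B y0 j :
  0 < y0 -> (forall y, 0 < y <= y0 -> Rabs (Rm y) <= B * y ^ S N) -> (j <= N)%nat ->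
  lim0 (fun z => iter_diff j (fun x => Rm (z * (x + 1))) 0 / z ^ j) 0.
Proof.
  intros Hy0 HB Hj.
  assert (HB0 : 0 <= B).
  { specialize (HB y0 ltac:(lra)). pose proof (Rabs_pos (Rm y0)).
    assert (0 < y0 ^ S N) by (apply pow_lt; lra). nra. }
  assert (HSN : 0 < INR (S N)) by (apply lt_0_INR; lia).
  set (Cst := 2 ^ j * B * INR (S N) ^ S N).
  apply (lim0_squeeze _ (fun z => Cst * z ^ (S N - j))).
  { rewrite <- (Rmult_0_r Cst). apply lim0_scal.
    replace 0 with (0 ^ (S N - j)) by (replace (S N - j)%nat with (S (N - j)) by lia; cbn; ring).
    apply lim0_pow, lim0_id. }
  exists (y0 / INR (S N)). split; [now apply Rdiv_lt_0_compat|].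
  intros z [Hz1 Hz2].
  assert (Hzy : z * INR (S N) < y0).
  { apply (Rmult_lt_compat_r (INR (S N))) in Hz2; auto. unfold Rdiv in Hz2.
    rewrite Rmult_assoc, Rinv_l, Rmult_1_r in Hz2; lra. }
  assert (Hzj : 0 < z ^ j) by (apply pow_lt; lra).
  assert (HD : Rabs (iter_diff j (fun x => Rm (z * (x + 1))) 0) <= 2 ^ j * (B * (z * INR (S N)) ^ S N)).
  { apply iter_diff_bound. intros l Hl. rewrite Rplus_0_l.
    assert (Hl' : INR l + 1 <= INR (S N)) by (rewrite <- S_INR; apply le_INR; lia).
    assert (Hlp : 0 < INR l + 1) by (pose proof (pos_INR l); lra).
    assert (z * (INR l + 1) <= z * INR (S N)) by (apply Rmult_le_compat_l; lra).
    eapply Rle_trans; [apply HB; split; [apply Rmult_lt_0_compat|]; lra|].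
    apply Rmult_le_compat_l; auto. apply pow_incr. split; [apply Rmult_le_pos|]; lra. }
  unfold Rdiv. rewrite Rabs_mult, Rabs_inv, (Rabs_right (z ^ j)) by lra.
  replace (Cst * z ^ (S N - j)) with (2 ^ j * (B * (z * INR (S N)) ^ S N) * / z ^ j).
  - apply Rmult_le_compat_r; [left; now apply Rinv_0_lt_compat | exact HD].
  - unfold Cst. replace (S N) with (j + (S N - j))%nat at 2 by lia.
    rewrite Rpow_mult_distr, pow_add.
    replace (INR (S N) ^ (j + (S N - j))) with (INR (S N) ^ S N) by (f_equal; lia).
    field. apply pow_nonzero; lra.
Qed.

Lemma infinite_sum_finite (a : nat -> R) N :
  (forall k, (N < k)%nat -> a k = 0) -> infinite_sum a (sum_lt (S N) a).
Proof.
  intros Ha eps He. exists N. intros n Hn. unfold R_dist.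
  replace (sum_f_R0 a n) with (sum_f_R0 a N).
  - rewrite sum_f_R0_sum_lt, Rminus_diag, Rabs_R0. lra.
  - induction n as [|n IH]; [now replace N with 0%nat by lia|].
    destruct (Nat.eq_dec N (S n)) as [->|Hne]; [reflexivity|].
    cbn [sum_f_R0]. rewrite <- IH, Ha by lia. ring.
Qed.

(** * The renormalized character P and its generator sigma *)

Definition sigma_of (P : forest -> list R) (w : forest) : R := - partial0 (P w).

Section RenormalizedCharacter.

Variables (F : R -> R) (mu : R) (Pinv : R -> forest -> R) (P : forest -> list R).
Hypothesis Hmu : 0 < mu.
Hypothesis Hinv : forall z w, conv (Pinv z) (phi F mu z) w = counit w.
Hypothesis HP : forall (w : forest) (s : R), 0 < s ->
  limit1_in (fun z => conv (Pinv z) (phi F s z) w) (fun z => 0 < z)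
            (peval (P w) (ln (s / mu))) 0.

Lemma P_limit v a : lim0 (fun z => conv (Pinv z) (phi F (mu * exp a) z) v) (peval (P v) a).
Proof.
  pose proof (HP v (mu * exp a)) as H.
  replace (mu * exp a / mu) with (exp a) in H by (field; lra).
  rewrite ln_exp in H. apply H. apply Rmult_lt_0_compat; auto; apply exp_pos.
Qed.

Lemma P_at0 v : peval (P v) 0 = counit v.
Proof.
  pose proof (P_limit v 0) as H. rewrite exp_0, Rmult_1_r in H.
  apply (lim0_unique _ _ _ H). apply (lim0_ext_pos (fun _ => counit v)).
  - intros; now rewrite Hinv.
  - apply lim0_const.
Qed.

(* P(1) is the constant polynomial 1, hence sigma(1) = 0. *)
Lemma sigma_unit : sigma_of P [] = 0.
Proof.
  assert (E : forall b, peval (P []) b = peval [1] b).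
  { intros b. apply (lim0_unique _ _ _ (P_limit [] b)).
    apply (lim0_ext_pos (fun _ => 1)).
    - intros z _. pose proof (Hinv z []) as H. rewrite conv_sumL in *. cbn in *.
      rewrite phi_unit in *. lra.
    - cbn. rewrite Rmult_0_r, Rplus_0_r. apply lim0_const. }
  unfold sigma_of, partial0. rewrite (coef_eq _ _ E 1). cbn. ring.
Qed.

Lemma P_group a b v :
  peval (P v) (a + b) = sumL (fun p => peval (P (fst p)) a * peval (P (snd p)) b) (cop v).
Proof.
  apply (lim0_unique _ _ _ (P_limit v (a + b))).
  apply (lim0_ext_pos (fun z => sumL (fun p => conv (Pinv z) (phi F (mu * exp a) z) (fst p) *
            (exp (z * (- a * INR (fsize (snd p)))) *
             conv (Pinv z) (phi F (mu * exp b) z) (snd p))) (cop v))).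
  { intros z _. rewrite phi_R_group_law, conv_sumL by auto. apply sumL_ext. intros p _.
    unfold grade_twist. do 3 f_equal. ring. }
  apply lim0_sumL. intros p _.
  rewrite <- (Rmult_1_l (peval (P (snd p)) b)).
  apply lim0_mult; [apply P_limit|]. apply lim0_mult; [apply lim0_exp_lin | apply P_limit].
Qed.

(* Differentiating the group law in b at 0 gives the recursion
   (k+1) P_{k+1}(v) = sum P_k(v') P_1(v'') for the coefficients P_k of P. *)
Lemma P_coef_rec v k :
  INR (S k) * nth (S k) (P v) 0 = sumL (fun p => nth k (P (fst p)) 0 * nth 1 (P (snd p)) 0) (cop v).
Proof.
  rewrite <- nth_pderiv.
  apply (coef_sumL _ (cop v) (fun p => P (fst p)) (fun p => nth 1 (P (snd p)) 0)).
  intros a. apply (uniqueness_limite (fun b => peval (P v) (a + b)) 0).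
  - intros eps He. destruct (peval_deriv (P v) a eps He) as [d Hd]. exists d.
    intros h H1 H2. rewrite Rplus_0_l, Rplus_0_r. now apply Hd.
  - replace (fun b => peval (P v) (a + b)) with
      (fun b => sumL (fun p => mult_real_fct (peval (P (fst p)) a) (peval (P (snd p))) b) (cop v))
      by (apply functional_extensionality; intro b; now rewrite P_group).
    apply derivable_pt_lim_sumL. intros p _.
    replace (peval (P (fst p)) a * nth 1 (P (snd p)) 0)
      with (peval (P (fst p)) a * peval (pderiv (P (snd p))) 0)
      by (rewrite peval_at0, nth_pderiv; simpl INR; ring).
    apply derivable_pt_lim_scal. apply peval_deriv.
Qed.

Definition scaled_coef (k : nat) (v : forest) : R :=
  INR (Factorial.fact k) * (-1) ^ k * nth k (P v) 0.

(* P is the exponential of -sigma: its rescaled coefficients are the powers sigma^{*k}. *)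
Lemma scaled_coef_conv_pow k v : scaled_coef k v = conv_pow (sigma_of P) k v.
Proof.
  revert v. induction k as [|k IH]; intros v.
  - unfold scaled_coef. cbn. rewrite <- peval_at0, P_at0. ring.
  - cbn [conv_pow]. rewrite <- conv_pow_comm.
    replace (conv_pow (sigma_of P) k) with (scaled_coef k) by (apply functional_extensionality; auto).
    unfold scaled_coef at 1. rewrite fact_simpl, mult_INR.
    transitivity (INR (Factorial.fact k) * (-1) ^ (S k) * (INR (S k) * nth (S k) (P v) 0)); [ring|].
    rewrite P_coef_rec, conv_sumL, <- sumL_scal_l.
    apply sumL_ext. intros p _. unfold scaled_coef, sigma_of, partial0. cbn [pow]. ring.
Qed.

Definition cop_moment (v : forest) (g : nat -> R) (z : R) : R :=
  sumL (fun p => Pinv z (fst p) * phi F mu z (snd p) * g (fsize (snd p))) (cop v).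

Lemma cop_moment_plus v g1 g2 z :
  cop_moment v (fun m => g1 m + g2 m) z = cop_moment v g1 z + cop_moment v g2 z.
Proof. unfold cop_moment. rewrite <- sumL_plus. apply sumL_ext. intros; ring. Qed.

Lemma cop_moment_sum_lt v n (G : nat -> nat -> R) z :
  cop_moment v (fun m => sum_lt n (fun k => G k m)) z =
  sum_lt n (fun k => cop_moment v (G k) z).
Proof.
  unfold cop_moment. rewrite <- sum_lt_sumL. apply sumL_ext. intros p _.
  now rewrite <- sum_lt_scal.
Qed.

Lemma cop_moment_newton v (h : R -> R) z :
  cop_moment v (fun m => h (INR m)) z =
  sum_lt (S (fsize v)) (fun j => iter_diff j h 0 * cop_moment v (fun m => binomR m j) z).
Proof.
  apply (sumL_newton (cop v) (fun p => Pinv z (fst p) * phi F mu z (snd p)) (fun p => fsize (snd p))).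
  intros p Hp. pose proof (size_cop v p Hp). lia.
Qed.

Lemma phi_R_tau_expansion v z b : 0 < z ->
  conv (Pinv z) (phi F (mu * exp b) z) v =
  sum_lt (S (fsize v)) (fun j => (z ^ j * cop_moment v (fun m => binomR m j) z) * tau z b ^ j).
Proof.
  intros Hz. rewrite conv_sumL, phi_rescale by auto.
  transitivity (cop_moment v (fun m => exp ((- (z * b)) * INR m)) z).
  { unfold cop_moment, grade_twist. apply sumL_ext. intros; ring. }
  pose proof (cop_moment_newton v (fun x => exp (- (z * b) * x)) z) as Hnewton.
  cbv beta in Hnewton. rewrite Hnewton. apply sum_lt_ext. intros j _.
  rewrite iter_diff_exp, Rmult_0_r, exp_0, Rmult_1_l.
  replace (exp (- (z * b)) - 1) with (z * tau z b) by (unfold tau; field; lra).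
  rewrite Rpow_mult_distr. ring.
Qed.

(* Taking j-th differences in b at b = 0, 1, ..., |v| of the expansion above
   gives a linear system for these quantities whose matrix tends to the
   triangular matrix (Delta^i (-b)^j (0))_{ij}; so they converge, and their
   limits are read off from P(v)(b) = sum_j lim (...) (-b)^j. *)
Lemma binomial_moment_limit v j : (j <= fsize v)%nat ->
  lim0 (fun z => z ^ j * cop_moment v (fun m => binomR m j) z) ((-1) ^ j * nth j (P v) 0).
Proof.
  intros Hj. set (n := S (fsize v)).
  set (K := fun z k => z ^ k * cop_moment v (fun m => binomR m k) z).
  set (E := fun z b => conv (Pinv z) (phi F (mu * exp b) z) v).
  assert (HE : forall z b, 0 < z -> E z b = sum_lt n (fun k => K z k * tau z b ^ k))
    by (intros; now apply phi_R_tau_expansion).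
  assert (Hpow : forall i k, iter_diff i (fun b => (- b) ^ k) 0 =
                             (-1) ^ k * iter_diff i (fun b => (b + 0) ^ k) 0).
  { intros i k. rewrite <- iter_diff_scal. apply iter_diff_ext. intros b.
    rewrite Rplus_0_r, <- Rpow_mult_distr. f_equal. ring. }
  destruct (triangular_limits n (fun z i k => iter_diff i (fun b => tau z b ^ k) 0) K
              (fun z i => iter_diff i (E z) 0)
              (fun i k => iter_diff i (fun b => (- b) ^ k) 0)
              (fun i => iter_diff i (peval (P v)) 0)) as [Kl HKl].
  - exists 1. split; [lra|]. intros z Hz i Hi.
    rewrite (iter_diff_ext i (E z) (fun b => sum_lt n (fun k => K z k * tau z b ^ k)))
      by (intros; apply HE; lra).
    rewrite iter_diff_sum_lt. apply sum_lt_ext. intros; ring.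
  - intros i k _ _. apply iter_diff_lim0. intros b. apply lim0_pow, tau_lim.
  - intros i _. apply iter_diff_lim0. intros b. apply P_limit.
  - intros i k Hki _. rewrite Hpow, (proj1 (iter_diff_pow i k 0 0)) by auto. ring.
  - intros i _. rewrite Hpow, (proj2 (iter_diff_pow i i 0 0)).
    apply Rmult_integral_contrapositive.
    split; [apply pow_nonzero; lra | apply INR_fact_neq_0].
  - (* the limits Kl determine P(v) as a polynomial in -b *)
    assert (Hpe : forall b, peval (P v) b = sum_lt n (fun k => (Kl k * (-1) ^ k) * b ^ k)).
    { intros b. apply (lim0_unique (fun z => E z b)); [apply P_limit|].
      apply (lim0_ext_pos (fun z => sum_lt n (fun k => K z k * tau z b ^ k)));
        [intros; now rewrite HE|].
      rewrite (sum_lt_ext n _ (fun k => Kl k * (- b) ^ k)).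
      + apply lim0_sum_lt. intros i Hi. apply lim0_mult; [now apply HKl | apply lim0_pow, tau_lim].
      + intros i _. replace (- b) with ((-1) * b) by ring. rewrite Rpow_mult_distr. ring. }
    rewrite (coef_sum_lt (P v) n _ Hpe j) by (unfold n; lia).
    replace ((-1) ^ j * (Kl j * (-1) ^ j)) with (Kl j * ((-1) * (-1)) ^ j)
      by (rewrite Rpow_mult_distr; ring).
    replace (-1 * -1) with 1 by ring. rewrite pow1, Rmult_1_r. apply HKl. unfold n; lia.
Qed.

(* z^k M_w((m + 1)^k) -> k! (-1)^k P_k(w): by Newton's formula only the
   binomial moment of order k survives in the limit. *)
Lemma power_moment_limit w k : (k <= fsize w)%nat ->
  lim0 (fun z => z ^ k * cop_moment w (fun m => (INR m + 1) ^ k) z) (scaled_coef k w).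
Proof.
  intros Hk. set (N := fsize w).
  set (D := fun j => iter_diff j (fun x => (x + 1) ^ k) 0).
  apply (lim0_ext_pos (fun z => sum_lt (S N) (fun j => D j * (z ^ k * cop_moment w (fun m => binomR m j) z)))).
  { intros z _. pose proof (cop_moment_newton w (fun x => (x + 1) ^ k) z) as Hnewton.
    cbv beta in Hnewton. rewrite Hnewton, <- sum_lt_scal. apply sum_lt_ext. intros; unfold D; ring. }
  replace (scaled_coef k w) with
    (sum_lt (S N) (fun j => if Nat.eq_dec j k then D k * ((-1) ^ k * nth k (P w) 0) else 0)).
  2:{ rewrite (sum_lt_single (S N) k); [| lia |].
      - destruct (Nat.eq_dec k k) as [_|]; [|lia]. unfold scaled_coef, D.
        rewrite (proj2 (iter_diff_pow k 0 1 0)). ring.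
      - intros j _ Hne. now destruct (Nat.eq_dec j k). }
  apply lim0_sum_lt. intros j Hj.
  destruct (Nat.eq_dec j k) as [->|Hne].
  - apply lim0_scal. apply binomial_moment_limit; auto.
  - destruct (Compare_dec.lt_dec j k) as [Hjk|Hjk].
    + (* j < k: z^k M = z^{k-j} (z^j M) and z^{k-j} -> 0 *)
      rewrite <- (Rmult_0_r (D j)). apply lim0_scal.
      rewrite <- (Rmult_0_l ((-1) ^ j * nth j (P w) 0)).
      apply (lim0_ext_pos (fun z => z ^ (k - j) * (z ^ j * cop_moment w (fun m => binomR m j) z))).
      { intros z _. rewrite <- Rmult_assoc, <- pow_add. do 3 f_equal. lia. }
      apply lim0_mult; [|apply binomial_moment_limit; unfold N in Hj; lia].
      replace 0 with (0 ^ (k - j)) by (replace (k - j)%nat with (S (k - j - 1)) by lia; cbn; ring).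
      apply lim0_pow, lim0_id.
    + (* j > k: Delta^j kills (x + 1)^k *)
      unfold D. rewrite (proj1 (iter_diff_pow j k 1 0)) by lia.
      apply (lim0_ext_pos (fun _ => 0)); [intros; ring | apply lim0_const].
Qed.

(* c k is the coefficient of z^k in z F(z), i.e. c_{k-1} in the Laurent expansion. *)
Variables (c : nat -> R) (r : R).
Hypothesis Hr : 0 < r.
Hypothesis HLaurent : forall y, 0 < y < r -> Pser c y (y * F y).

Definition laurent_trunc (N : nat) (y : R) : R := sum_lt (S N) (fun k => c k * y ^ k).

Lemma moment_trunc_limit w :
  lim0 (fun z => cop_moment w (fun m => laurent_trunc (fsize w) (z * INR (S m))) z)
       (sum_lt (S (fsize w)) (fun k => c k * scaled_coef k w)).
Proof.
  apply (lim0_ext_pos (fun z => sum_lt (S (fsize w))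
           (fun k => c k * (z ^ k * cop_moment w (fun m => (INR m + 1) ^ k) z)))).
  { intros z _. unfold laurent_trunc. rewrite cop_moment_sum_lt. apply sum_lt_ext. intros k _.
    unfold cop_moment. rewrite <- !sumL_scal_l. apply sumL_ext. intros p _.
    rewrite S_INR, Rpow_mult_distr. ring. }
  apply lim0_sum_lt. intros k Hk. apply lim0_scal, power_moment_limit. lia.
Qed.

Lemma moment_remainder_limit w :
  lim0 (fun z => cop_moment w (fun m => z * INR (S m) * F (z * INR (S m)) -
                                        laurent_trunc (fsize w) (z * INR (S m))) z) 0.
Proof.
  set (N := fsize w).
  set (Rm := fun y => y * F y - laurent_trunc N y).
  destruct (pser_remainder_bound c (fun y => y * F y) r N Hr HLaurent) as [y0 [B [Hy0 HB]]].
  apply (lim0_ext_pos (fun z => sum_lt (S N) (fun j =>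
           (iter_diff j (fun x => Rm (z * (x + 1))) 0 / z ^ j) *
           (z ^ j * cop_moment w (fun m => binomR m j) z)))).
  { intros z Hz.
    pose proof (cop_moment_newton w (fun x => Rm (z * (x + 1))) z) as Hnewton. cbv beta in Hnewton.
    transitivity (cop_moment w (fun m => Rm (z * (INR m + 1))) z).
    - rewrite Hnewton. apply sum_lt_ext. intros j _. field. apply pow_nonzero; lra.
    - unfold cop_moment, Rm. apply sumL_ext. intros p _. now rewrite S_INR. }
  match goal with |- lim0 ?f _ =>
    enough (H0 : lim0 f (sum_lt (S N) (fun j => 0 * ((-1) ^ j * nth j (P w) 0))))
      by (rewrite sum_lt_zero in H0 by (intros; ring); exact H0) end.
  apply lim0_sum_lt. intros j Hj. apply lim0_mult.
  - apply (scaled_diff_remainder_lim Rm N B y0); auto. lia.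
  - apply binomial_moment_limit. unfold N in Hj. lia.
Qed.

Lemma sigma_Bplus w :
  sigma_of P [Bplus w] = sum_lt (S (fsize w)) (fun k => c k * scaled_coef k w).
Proof.
  pose proof (binomial_moment_limit [Node w] 1) as HA.
  rewrite fsize_single, tsize_Node in HA. specialize (HA ltac:(lia)).
  unfold sigma_of, partial0, Bplus.
  replace (- nth 1 (P [Node w]) 0) with ((-1) ^ 1 * nth 1 (P [Node w]) 0) by ring.
  apply (lim0_unique _ _ _ HA).
  (* z M_{B_+ w}(binom(., 1)) = mu^{-z} M_w(m |-> y F(y)), y = z (m + 1) *)
  apply (lim0_ext_pos (fun z => Rpower mu (- z) *
      (cop_moment w (fun m => laurent_trunc (fsize w) (z * INR (S m))) z +
       cop_moment w (fun m => z * INR (S m) * F (z * INR (S m)) -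
                              laurent_trunc (fsize w) (z * INR (S m))) z))).
  { intros z Hz. rewrite <- cop_moment_plus. unfold cop_moment.
    rewrite cop_single, cop_t_Node, sumL_cons, sumL_map, <- sumL_scal_l.
    cbn [fst snd]. change (binomR (fsize []) 1) with 0. rewrite Rmult_0_r, Rplus_0_l, <- sumL_scal_l.
    apply sumL_ext. intros p _. cbn [fst snd].
    rewrite phi_Node, binomR_1, fsize_single, tsize_Node. unfold forest in *. ring. }
  rewrite <- (Rmult_1_l (sum_lt _ _)), <- (Rplus_0_r (sum_lt _ _)).
  apply lim0_mult.
  - apply (lim0_ext_pos (fun z => exp (z * (- ln mu)))); [intros; unfold Rpower; f_equal; ring|].
    apply lim0_exp_lin.
  - apply lim0_plus; [apply moment_trunc_limit | apply moment_remainder_limit].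
Qed.

Lemma sigma_Bplus_conv_pow w :
  sigma_of P [Bplus w] = sum_lt (S (fsize w)) (fun k => c k * conv_pow (sigma_of P) k w).
Proof.
  rewrite sigma_Bplus. apply sum_lt_ext. intros k _. now rewrite scaled_coef_conv_pow.
Qed.

End RenormalizedCharacter.

Theorem mainTheorem11
  (* the generic model: f, its asymptotics, its Mellin transform F *)
  (f : R -> R) (c0 eps : R)
  (Hf_cont : forall x, 0 <= x -> limit1_in f (fun y => 0 <= y) (f x) x)
  (Heps : 0 < eps)
  (Hf_asym : exists K M, 0 < M /\ forall x, M <= x ->
       Rabs (f x - c0 / x) <= K * Rpower x (- 1 - eps))
  (F : R -> R)
  (HMellin : forall z, 0 < z < 1 ->
       improper_int_0_inf (fun x => f x * Rpower x (- z)) (F z))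
  (* Laurent expansion F(z) = sum_{n>=-1} c_n z^n near 0; here c n = c_{n-1} *)
  (c : nat -> R) (r : R) (Hr : 0 < r)
  (HLaurent : forall z, 0 < z < r -> Pser c z (z * F z))
  (* renormalization point mu and the convolution inverse of phi_mu *)
  (mu : R) (Hmu : 0 < mu)
  (phi_mu_inv : R -> forest -> R)
  (Hinv : forall z w, conv (phi_mu_inv z) (phi F mu z) w = counit w)
  (* P(w) : lim_{z -> 0} phi_{R,s}(w) = P(w)(ln (s/mu)) *)
  (P : forest -> list R)
  (HP : forall (w : forest) (s : R), 0 < s ->
       limit1_in (fun z => conv (phi_mu_inv z) (phi F s z) w) (fun z => 0 < z)
                 (peval (P w) (ln (s / mu))) 0) :
  let sigma := fun w => - partial0 (P w) in
  (forall (n : nat) (w : forest), (fsize w < n)%nat -> conv_pow sigma n w = 0) /\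
  (forall w : forest,
     infinite_sum (fun n => c n * conv_pow sigma n w) (sigma [Bplus w])).
Proof.
  intros sigma. change sigma with (sigma_of P).
  pose proof (conv_pow_vanish (sigma_of P) (sigma_unit F mu phi_mu_inv P Hmu Hinv HP)) as Hvanish.
  split; [exact Hvanish|]. intros w.
  rewrite (sigma_Bplus_conv_pow F mu phi_mu_inv P Hmu Hinv HP c r Hr HLaurent w).
  apply infinite_sum_finite. intros k Hk. rewrite Hvanish by lia. ring.
Qed.
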